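(* Let $G=(V,E)$ be a finite graph with $n=|V|\ge 1$. Let $\mathrm{PCE}(G)$ be the minimum size of an edge set $S\subseteq E$ such that $(V,E\setminus S)$ admits a perfect code. Then $$\mathrm{PCE}(G)\le(\mathrm{mac}(G)-1)\,n\le 2\,\mathrm{PCE}(G).$$
   Context: A dominating set of $G$ is a set $D\subseteq V$ with $N[D]=V$, where $N[v]$ is the closed neighborhood. A perfect code is a dominating set $D$ with $|N[v]\cap D|=1$ for all $v\in V$ (deleting all edges always yields a graph with a perfect code, namely $V$, so $\mathrm{PCE}(G)$ is well defined). The average congestion of $S\subseteq V$ is $\overline{\mathrm{cong}}(S)=\frac{1}{|V|}\sum_{v\in V}|N[v]\cap S|$, and $\mathrm{mac}(G)$ is the minimum of $\overline{\mathrm{cong}}(D)$ over all dominating sets $D$ of $G$. *)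

(* A finite simple graph on a finType T is given by a
   symmetric irreflexive adjacency relation e : rel T. *)
From mathcomp Require Import all_boot all_order all_algebra.
Set Implicit Arguments. Unset Strict Implicit. Unset Printing Implicit Defensive.
Import Order.TTheory GRing.Theory Num.Theory.

Section Graphs.
Variable T : finType.

Definition cnbhd (a : rel T) (v : T) : {set T} := [set u | (u == v) || a v u].

Definition cnbhd_set (a : rel T) (D : {set T}) : {set T} :=
  \bigcup_(d in D) cnbhd a d.

Definition dominating (a : rel T) (D : {set T}) : bool :=
  cnbhd_set a D == [set: T].

Definition perfect_code (a : rel T) (D : {set T}) : bool :=
  dominating a D && [forall v, #|cnbhd a v :&: D| == 1%N].

Definition edges (e : rel T) : {set {set T}} :=
  [set [set p.1; p.2] | p in [pred p : T * T | e p.1 p.2]].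

Definition del_edges (e : rel T) (S : {set {set T}}) : rel T :=
  fun x y => e x y && ([set x; y] \notin S).

(* PCE(G): minimum |S| over S ⊆ E such that (V, E \ S) has a perfect code
   (S = E always qualifies, so #|E| is an attained default). *)
Definition PCE (e : rel T) : nat :=
  \big[minn/#|edges e|]_(S : {set {set T}} |
        (S \subset edges e) && [exists D : {set T}, perfect_code (del_edges e S) D])
     #|S|.

Definition avg_cong (a : rel T) (S : {set T}) : rat :=
  ((\sum_(v : T) #|cnbhd a v :&: S|)%:R / #|T|%:R)%R.

(* mac(G): minimum average congestion over dominating sets
   (the whole vertex set is dominating, so it is an attained default). *)
Definition mac (a : rel T) : rat :=
  \big[Order.min/avg_cong a [set: T]]_(D : {set T} | dominating a D) avg_cong a D.

End Graphs.

From mathcomp Require Import all_boot all_order all_algebra.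
Import Order.TTheory GRing.Theory Num.Theory.

Set Implicit Arguments.
Unset Strict Implicit.
Unset Printing Implicit Defensive.

(* Up to the normalisation [(mac - 1) n = \sum_v |N[v] ∩ D| - n], both bounds
   compare the total congestion of a dominating set with edge deletions.
   Deleting an edge {v,d} lowers |N[v] ∩ D| and |N[d] ∩ D| by at most one
   each, and a perfect code has total congestion exactly n: this gives
   (mac - 1) n <= 2 PCE.  Conversely, given a dominating set D, assign to
   every vertex v a dominator f(v) ∈ N[v] ∩ D (with f(v) = v for v ∈ D) and
   delete every edge {v,d} with d ∈ D, d ≠ f(v); then D is a perfect code,
   and each vertex v accounts for |N[v] ∩ D| - 1 deleted edges, so
   PCE <= (mac - 1) n. *)

Section Congestion.
Variable T : finType.
Implicit Types (a : rel T) (D : {set T}).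

Definition total_cong a D : nat := \sum_(v : T) #|cnbhd a v :&: D|.

Lemma avg_congE a D : (0 < #|T|)%N ->
  ((avg_cong a D - 1) * #|T|%:R = (total_cong a D)%:R - #|T|%:R :> rat)%R.
Proof.
move=> hn; rewrite /avg_cong mulrBl mul1r -mulrA mulVf ?mulr1 //.
by rewrite pnatr_eq0 -lt0n.
Qed.

Lemma cnbhd_refl a v : v \in cnbhd a v.
Proof. by rewrite inE eqxx. Qed.

Lemma cnbhd_sym a u v : symmetric a -> (u \in cnbhd a v) = (v \in cnbhd a u).
Proof. by move=> a_sym; rewrite !inE eq_sym a_sym. Qed.

Lemma dominatingP a D :
  reflect (forall v, exists2 d, d \in D & v \in cnbhd a d) (dominating a D).
Proof.
apply: (iffP eqP) => [domD v | domD].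
  have /bigcupP[d dD vd] : v \in cnbhd_set a D by rewrite domD inE.
  by exists d.
apply/setP => v; rewrite inE; have [d dD vd] := domD v.
by apply/bigcupP; exists d.
Qed.

Lemma dominating_setT a : dominating a [set: T].
Proof. by apply/dominatingP => v; exists v; rewrite (in_setT, cnbhd_refl). Qed.

Lemma sub_dominating a a' D : subrel a a' -> dominating a D -> dominating a' D.
Proof.
move=> sub_aa' /dominatingP domD; apply/dominatingP => v.
have [d dD] := domD v; rewrite !inE => /orP vd.
by exists d => //; rewrite !inE; case: vd => [-> // | /sub_aa' ->]; rewrite orbT.
Qed.

Lemma total_cong_perfect_code a D : perfect_code a D -> total_cong a D = #|T|.
Proof.
case/andP=> _ /forallP cong1.
by rewrite -sum1_card; apply: eq_bigr => v _; apply/eqP.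
Qed.

Lemma mac_le a D : dominating a D -> (mac a <= avg_cong a D)%R.
Proof. exact: bigmin_le_cond. Qed.

Lemma avg_cong_le_setT a D : (avg_cong a D <= avg_cong a [set: T])%R.
Proof.
rewrite ler_wpM2r ?invr_ge0 ?ler0n // ler_nat.
by apply: leq_sum => v _; rewrite subset_leq_card ?setIS ?subsetT.
Qed.

Lemma mac_attained a : exists2 D, dominating a D & mac a = avg_cong a D.
Proof.
rewrite /mac; have [D domD ->] :=
  eq_bigmin _ _ _ (dominating_setT a) (fun D _ => avg_cong_le_setT a D).
by exists D.
Qed.

End Congestion.

Lemma card_dep_pairs (T : finType) (A : T -> {set T}) :
  #|[set p : T * T | p.2 \in A p.1]| = \sum_(v : T) #|A v|.
Proof.
rewrite -sum1dep_card big_mkcond /=.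
rewrite (eq_bigr (fun v => \sum_d (d \in A v : nat))); last first.
  by move=> v _; rewrite -sum1_card big_mkcond.
by rewrite pair_big /=; apply: eq_bigr => p _; case: (_ \in _).
Qed.

Lemma sum_card_incident (T : finType) (S : {set {set T}}) :
  \sum_(v : T) #|[set s in S | v \in s]| = \sum_(s in S) #|s|.
Proof.
rewrite (eq_bigr (fun v => \sum_(s in S) (v \in s : nat))); last first.
  by move=> v _; rewrite -sum1_card big_mkcond /= [RHS]big_mkcond /=;
     apply: eq_bigr => s _; rewrite !inE; case: (s \in S); case: (v \in s).
rewrite exchange_big /=; apply: eq_bigr => s _.
by rewrite -sum1_card [RHS]big_mkcond /=; apply: eq_bigr => v _; case: (v \in s).
Qed.

Lemma set2_inj (T : finType) (v : T) : injective (fun d : T => [set v; d]).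
Proof.
move=> d d' eq_vd.
have : d \in [set v; d'] by rewrite -eq_vd !inE eqxx orbT.
rewrite !inE => /orP [/eqP dv | /eqP //]; subst d.
have : d' \in [set v; v] by rewrite eq_vd !inE eqxx orbT.
by rewrite !inE orbb => /eqP.
Qed.

Section EdgeDeletion.
Variables (T : finType) (e : rel T).
Hypotheses (e_sym : symmetric e) (e_irr : irreflexive e).
Implicit Types (D : {set T}) (S : {set {set T}}).

Lemma del_edges_sub S : subrel (del_edges e S) e.
Proof. by move=> x y /andP[]. Qed.

Lemma del_edges_sym S : symmetric (del_edges e S).
Proof. by move=> x y; rewrite /del_edges e_sym setUC. Qed.

Lemma edge_in_edges x y : e x y -> [set x; y] \in edges e.
Proof. by move=> exy; apply/imsetP; exists (x, y). Qed.

Lemma card_edge s : s \in edges e -> (#|s| <= 2)%N.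
Proof. by case/imsetP => p _ ->; rewrite cards2; case: (_ != _). Qed.

Lemma perfect_code_del_all_edges : perfect_code (del_edges e (edges e)) [set: T].
Proof.
rewrite /perfect_code dominating_setT; apply/forallP => v; rewrite setIT.
suff -> : cnbhd (del_edges e (edges e)) v = [set v] by rewrite cards1.
apply/setP => u; rewrite !inE /del_edges.
by case: (boolP (e v u)) => [/edge_in_edges -> | _]; rewrite ?orbF.
Qed.

Lemma PCE_le S D : S \subset edges e -> perfect_code (del_edges e S) D ->
  (PCE e <= #|S|)%N.
Proof.
move=> SE pcD; rewrite /PCE -minEnat; apply: (@bigmin_le_cond _ nat).
by rewrite SE; apply/existsP; exists D.
Qed.

Lemma PCE_attained : exists S D,
  [/\ S \subset edges e, perfect_code (del_edges e S) D & PCE e = #|S|].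
Proof.
pose repairing S := (S \subset edges e) && [exists D, perfect_code (del_edges e S) D].
have repairing_edges : repairing (edges e).
  rewrite /repairing subxx; apply/existsP; exists [set: T].
  exact: perfect_code_del_all_edges.
have card_repairing S : repairing S -> (#|S| <= #|edges e|)%N.
  by case/andP => SE _; apply: subset_leq_card.
rewrite /PCE -minEnat.
have [S /andP[SE /existsP[D pcD]] ->] :=
  eq_bigmin (T := nat) _ _ (fun S => #|S|) repairing_edges card_repairing.
by exists S, D.
Qed.

Lemma card_cnbhd_del_edges S D v :
  (#|cnbhd e v :&: D| <=
     #|cnbhd (del_edges e S) v :&: D| + #|[set s in S | v \in s]|)%N.
Proof.
have sub_cnbhd : cnbhd e v :&: D \subset
    (cnbhd (del_edges e S) v :&: D) :|: [set d | [set v; d] \in S].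
  apply/subsetP => d; rewrite !inE => /andP[vd ->] /=.
  rewrite andbT; case/orP: vd => [-> // | evd].
  by rewrite /del_edges evd /= -orbA orNb orbT.
apply: leq_trans (subset_leq_card sub_cnbhd) _.
apply: leq_trans (leq_card_setU _ _) _; rewrite leq_add2l.
rewrite -(card_imset _ (@set2_inj _ v)); apply: subset_leq_card.
by apply/subsetP => s /imsetP[d]; rewrite inE => vdS ->; rewrite !inE vdS eqxx.
Qed.

Lemma total_cong_del_edges S D : S \subset edges e ->
  (total_cong e D <= total_cong (del_edges e S) D + 2 * #|S|)%N.
Proof.
move=> SE; rewrite /total_cong; apply: (@leq_trans
  (\sum_v (#|cnbhd (del_edges e S) v :&: D| + #|[set s in S | v \in s]|))).
  by apply: leq_sum => v _; apply: card_cnbhd_del_edges.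
rewrite big_split /= leq_add2l sum_card_incident mulnC -sum_nat_const.
by apply: leq_sum => s sS; apply/card_edge/(subsetP SE).
Qed.

Section Dominator.
Variable D : {set T}.
Hypothesis D_dom : dominating e D.

Definition dominator v : T := if v \in D then v else odflt v [pick d in D | e v d].

Lemma dominator_id v : v \in D -> dominator v = v.
Proof. by rewrite /dominator => ->. Qed.

Lemma dominator_spec v : dominator v \in D /\ (v \notin D -> e v (dominator v)).
Proof.
rewrite /dominator; case: ifPn => [// | vD].
have [d dD] := dominatingP _ _ D_dom v; rewrite !inE => /orP[/eqP vd | edv].
  by rewrite vd dD in vD.
case: pickP => [d' /andP[d'D evd'] // | no_adj].
by have := no_adj d; rewrite dD e_sym edv.
Qed.

Definition surplus_nbhd v : {set T} := [set d in D | e v d & d != dominator v].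

Definition surplus_edges : {set {set T}} :=
  [set [set p.1; p.2] | p in [set p : T * T | p.2 \in surplus_nbhd p.1]].

Lemma surplus_edges_sub : surplus_edges \subset edges e.
Proof.
apply/subsetP => s /imsetP[[v d]]; rewrite !inE /= => /and3P[_ evd _] ->.
exact: edge_in_edges.
Qed.

Lemma cnbhd_dominatorE v : cnbhd e v :&: D = dominator v |: surplus_nbhd v.
Proof.
have [fvD fv_adj] := dominator_spec v.
apply/setP => d; rewrite !inE; have [-> | d_fv] /= := eqVneq d (dominator v).
  case: (boolP (v \in D)) => vD; first by rewrite dominator_id ?eqxx.
  by rewrite fv_adj ?orbT.
rewrite andbT andbC; apply: andb_id2l => dD.
by case: eqVneq => [dv | //]; rewrite dv dominator_id -?dv ?eqxx in d_fv.
Qed.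

Lemma dominator_edge_kept v : v \notin D -> [set v; dominator v] \notin surplus_edges.
Proof.
move=> vD; apply/imsetP => -[[x y]]; rewrite !inE /= => /and3P[yD exy y_fx] vfv.
have y_fv : y = dominator v.
  have : y \in [set v; dominator v] by rewrite vfv !inE eqxx orbT.
  by rewrite !inE => /orP[/eqP yv | /eqP //]; rewrite -yv yD in vD.
have : x \in [set v; dominator v] by rewrite vfv !inE eqxx.
rewrite !inE => /orP[/eqP xv | /eqP xfv]; first by rewrite xv y_fv eqxx in y_fx.
by rewrite xfv -y_fv e_irr in exy.
Qed.

Lemma cnbhd_del_surplus v :
  cnbhd (del_edges e surplus_edges) v :&: D = [set dominator v].
Proof.
have [fvD fv_adj] := dominator_spec v.
apply/setP => d; rewrite !inE; apply/idP/eqP => [| ->].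
  case/andP => /orP[/eqP -> vD | /andP[evd dS] dD]; first by rewrite dominator_id.
  apply/eqP; apply: contraNT dS => d_fv.
  by apply/imsetP; exists (v, d); rewrite // !inE dD evd d_fv.
rewrite fvD andbT; case: (boolP (v \in D)) => vD; first by rewrite dominator_id ?eqxx.
by rewrite /del_edges fv_adj // dominator_edge_kept // orbT.
Qed.

Lemma perfect_code_del_surplus : perfect_code (del_edges e surplus_edges) D.
Proof.
apply/andP; split; last by apply/forallP => v; rewrite cnbhd_del_surplus cards1.
apply/dominatingP => v; exists (dominator v); first by case: (dominator_spec v).
rewrite cnbhd_sym; last exact: del_edges_sym.
by have := set11 (dominator v); rewrite -cnbhd_del_surplus => /setIP[].
Qed.

Lemma card_surplus_edges : (#|surplus_edges| + #|T| <= total_cong e D)%N.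
Proof.
rewrite /total_cong (eq_bigr (fun v => #|surplus_nbhd v| + 1)); last first.
  by move=> v _; rewrite cnbhd_dominatorE cardsU1 !inE eqxx /= !andbF addnC.
rewrite big_split /= sum1_card leq_add2r -card_dep_pairs.
exact: leq_imset_card.
Qed.
End Dominator.

End EdgeDeletion.

Theorem mainTheorem4 (T : finType) (e : rel T)
  (e_sym : symmetric e) (e_irr : irreflexive e) (hn : (0 < #|T|)%N) :
  ((PCE e)%:R <= (mac e - 1) * #|T|%:R :> rat)%R /\
  ((mac e - 1) * #|T|%:R <= 2%:R * (PCE e)%:R :> rat)%R.
Proof.
split.
- have [D D_dom ->] := mac_attained e.
  rewrite avg_congE // lerBrDr -natrD ler_nat.
  apply: leq_trans (card_surplus_edges e_sym D_dom); rewrite leq_add2r.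
  exact: PCE_le (surplus_edges_sub e D) (perfect_code_del_surplus e_sym e_irr D_dom).
- have [S [D [SE pcD ->]]] := PCE_attained e.
  have D_dom : dominating e D :=
    sub_dominating (@del_edges_sub _ e S) (proj1 (andP pcD)).
  apply: (@le_trans _ _ ((avg_cong e D - 1) * #|T|%:R)%R).
    by rewrite ler_wpM2r ?ler0n // lerD2r mac_le.
  rewrite avg_congE // lerBlDl -natrM -natrD ler_nat.
  by rewrite -{1}(total_cong_perfect_code pcD) total_cong_del_edges.
Qed.
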